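(* Let $L \ge N$, let $\mathbf{T} \in \mathbb{R}^{L\times N}$ have full rank $N$, and let $\gamma>0$. Define the set-valued map $H:\mathbb{R}^N\rightrightarrows\mathbb{R}^N$ by $\mathbf{y}\in H(\mathbf{x})$ if and only if $\mathbf{x} = \mathbf{T}^{\dagger}S_\gamma\mathbf{T}(\mathbf{x}+\mathbf{y})$. Equip $\mathbb{R}^N$ with the scalar product $\langle\mathbf{x},\mathbf{y}\rangle_{\mathbf{T}} := \mathbf{x}^T\mathbf{T}^*\mathbf{T}\mathbf{y}$. Then $H$ is cyclically monotone with respect to $\langle\cdot,\cdot\rangle_{\mathbf{T}}$: for every integer $m\ge 2$, all $\mathbf{x}_1,\dots,\mathbf{x}_m\in\mathbb{R}^N$ and all $\mathbf{y}_i\in H(\mathbf{x}_i)$, $i=1,\dots,m$, $$\langle \mathbf{x}_2-\mathbf{x}_1,\mathbf{y}_1\rangle_{\mathbf{T}} + \langle \mathbf{x}_3-\mathbf{x}_2,\mathbf{y}_2\rangle_{\mathbf{T}} + \cdots + \langle \mathbf{x}_1-\mathbf{x}_m,\mathbf{y}_m\rangle_{\mathbf{T}} \le 0.$$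
   Context: $\mathbf{T}^*$ is the transpose of $\mathbf{T}$, $\mathbf{T}^{\dagger}=(\mathbf{T}^*\mathbf{T})^{-1}\mathbf{T}^*$ its Moore–Penrose inverse. $S_\gamma:\mathbb{R}^L\to\mathbb{R}^L$ is componentwise soft shrinkage: $[S_\gamma(\mathbf{y})]_j = y_j-\gamma$ if $y_j\ge\gamma$, $y_j+\gamma$ if $y_j\le-\gamma$, $0$ if $|y_j|<\gamma$. *)

From mathcomp Require Import all_boot all_order all_algebra.
From mathcomp Require Import reals.
Set Implicit Arguments. Unset Strict Implicit. Unset Printing Implicit Defensive.
Import Order.TTheory GRing.Theory Num.Theory.
Local Open Scope ring_scope.

(* Vectors of R^n are column vectors 'cV[R]_n; T^* is the transpose T^T. *)

(* Moore--Penrose inverse of a full-column-rank matrix: (T^T T)^{-1} T^T *)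
Definition pinv (R : realType) (L N : nat) (T : 'M[R]_(L, N)) : 'M[R]_(N, L) :=
  invmx (T^T *m T) *m T^T.

Definition soft (R : realType) (g y : R) : R :=
  if g <= y then y - g else if y <= - g then y + g else 0.

Definition Sgamma (R : realType) (L : nat) (g : R) (y : 'cV[R]_L) : 'cV[R]_L :=
  \col_i soft g (y i 0).

Definition Hmap (R : realType) (L N : nat) (T : 'M[R]_(L, N)) (g : R)
  (x y : 'cV[R]_N) : Prop :=
  x = pinv T *m Sgamma g (T *m (x + y)).

Definition ipT (R : realType) (L N : nat) (T : 'M[R]_(L, N)) (x y : 'cV[R]_N) : R :=
  (x^T *m (T^T *m T) *m y) 0 0.

(* Soft shrinkage is the proximal map of g|.|, so z - S_g(z) is a subgradient
   of g|.|_1 at S_g(z).  If y is in H(x), write s := S_g(T(x + y)); then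
   w := Tx - s is orthogonal to the range of T, and the quantity
   P(x, y) := g |s|_1 + |w|^2 / 2 satisfies the subgradient-type inequality
   <x' - x, y>_T <= P(x', y') - P(x, y) for any other pair y' in H(x').
   Summing it along the cycle makes the right-hand sides telescope to 0. *)

From mathcomp Require Import all_boot all_order all_algebra.
From mathcomp Require Import reals.
From mathcomp Require Import ring lra.
Import Order.TTheory GRing.Theory Num.Theory.
Local Open Scope ring_scope.
Set Implicit Arguments. Unset Strict Implicit. Unset Printing Implicit Defensive.

Lemma cyclic_sum_le0 (R : numDomainType) (m : nat) (c f : 'I_m -> R) :
  (forall i, c i <= f (ordS i) - f i) -> \sum_i c i <= 0.
Proof.
move=> hcf; apply: le_trans (ler_sum _ (fun i _ => hcf i)) _.
by rewrite sumrB [X in _ - X](reindex_inj (@ordS_inj _)) subrr.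
Qed.

Definition dotc (R : pzRingType) (n : nat) (a b : 'cV[R]_n) : R :=
  (a^T *m b) 0 0.

Definition l1norm (R : numDomainType) (n : nat) (a : 'cV[R]_n) : R :=
  \sum_i `|a i 0|.

Section DotProduct.
Variables (R : comPzRingType) (n : nat).
Implicit Types a b : 'cV[R]_n.

Lemma dotcE a b : dotc a b = \sum_i a i 0 * b i 0.
Proof. by rewrite /dotc mxE; apply: eq_bigr => i _; rewrite mxE. Qed.

Lemma dotc_mulmxr (p : nat) (M : 'M[R]_(n, p)) a (b : 'cV[R]_p) :
  dotc a (M *m b) = dotc (M^T *m a) b.
Proof. by rewrite /dotc trmx_mul trmxK mulmxA. Qed.

Lemma dotc_orth_range (p : nat) (M : 'M[R]_(n, p)) a (b : 'cV[R]_p) :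
  M^T *m a = 0 -> dotc a (M *m b) = 0.
Proof. by rewrite dotc_mulmxr => ->; rewrite /dotc trmx0 mul0mx mxE. Qed.

End DotProduct.

Lemma ipT_dotc (R : realType) (L N : nat) (T : 'M[R]_(L, N)) (a b : 'cV[R]_N) :
  ipT T a b = dotc (T *m a) (T *m b).
Proof. by rewrite /ipT /dotc trmx_mul !mulmxA. Qed.

Section RealDotProduct.
Variables (R : realFieldType) (n : nat).
Implicit Types a b : 'cV[R]_n.

Lemma dotc_eq0 a : (dotc a a == 0) = (a == 0).
Proof.
apply/eqP/eqP => [|->]; last by rewrite dotcE big1 // => i _; rewrite mxE mul0r.
rewrite dotcE => /psumr_eq0P sq0; apply/matrixP => i j.
rewrite ord1 mxE; apply/eqP; rewrite -[_ == 0]orbb -mulf_eq0; apply/eqP.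
by apply: sq0 => // k _; rewrite -expr2 sqr_ge0.
Qed.

Lemma dotc_le_mean a b : dotc a b <= (dotc a a + dotc b b) / 2.
Proof.
rewrite !dotcE -big_split /= mulr_suml; apply: ler_sum => i _.
by have := sqr_ge0 (a i 0 - b i 0); nra.
Qed.

End RealDotProduct.

Lemma unitmx_gram (R : realFieldType) (m n : nat) (T : 'M[R]_(m, n)) :
  \rank T = n -> T^T *m T \in unitmx.
Proof.
move=> rankT; rewrite -row_free_unit; apply: inj_row_free => v vTT0.
have Tv0 : T *m v^T = 0.
  apply/eqP; rewrite -dotc_eq0 /dotc trmx_mul trmxK mulmxA -(mulmxA v).
  by rewrite vTT0 mul0mx mxE.
have freeTt : row_free T^T by rewrite /row_free mxrank_tr rankT.
apply/eqP; rewrite -(mulmx_free_eq0 _ freeTt).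
by rewrite -[v *m _]trmxK trmx_mul trmxK Tv0 trmx0.
Qed.

Lemma soft_prox_ineq (R : realType) (g z t : R) : 0 < g ->
  (t - soft g z) * (z - soft g z) <= g * (`|t| - `|soft g z|).
Proof.
move=> g_gt0; have t_le := ler_norm t.
have Nt_le : - t <= `|t| by rewrite -normrN ler_norm.
rewrite /soft; case: ifP => [gz|/negbT]; last rewrite -ltNge => zg.
  by rewrite [`|z - g|]ger0_norm ?subr_ge0 //; nra.
case: ifP => [zNg|/negbT].
  by rewrite [`|z + g|]ler0_norm -?lerBrDr ?sub0r //; nra.
by rewrite -ltNge normr0 subr0 => Ngz; nra.
Qed.

Lemma Sgamma_prox_ineq (R : realType) (L : nat) (g : R) (z t : 'cV[R]_L) :
  0 < g ->
  dotc (t - Sgamma g z) (z - Sgamma g z)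
    <= g * (l1norm t - l1norm (Sgamma g z)).
Proof.
move=> g_gt0; rewrite dotcE /l1norm -sumrB mulr_sumr; apply: ler_sum => i _.
by rewrite !mxE; apply: soft_prox_ineq.
Qed.

Lemma Hmap_normal_eq (R : realType) (L N : nat) (T : 'M[R]_(L, N)) (g : R)
    (x y : 'cV[R]_N) :
  T^T *m T \in unitmx -> Hmap T g x y ->
  T^T *m (T *m x - Sgamma g (T *m (x + y))) = 0.
Proof.
move=> unitG Hxy.
by rewrite mulmxBr {1}Hxy /pinv !mulmxA mulmxV // mul1mx subrr.
Qed.

Definition shrink_potential (R : realType) (L N : nat) (T : 'M[R]_(L, N))
    (g : R) (x y : 'cV[R]_N) : R :=
  let s := Sgamma g (T *m (x + y)) in
  g * l1norm s + dotc (T *m x - s) (T *m x - s) / 2.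

Lemma ipT_le_potentialB (R : realType) (L N : nat) (T : 'M[R]_(L, N)) (g : R)
    (x y x' y' : 'cV[R]_N) :
  0 < g ->
  T^T *m (T *m x - Sgamma g (T *m (x + y))) = 0 ->
  T^T *m (T *m x' - Sgamma g (T *m (x' + y'))) = 0 ->
  ipT T (x' - x) y <= shrink_potential T g x' y' - shrink_potential T g x y.
Proof.
move=> g_gt0 orth orth'; rewrite ipT_dotc mulmxBr /shrink_potential.
set u := T *m x; set u' := T *m x'; set v := T *m y.
rewrite [T *m (x + y)]mulmxDr -/u -/v in orth *.
set s := Sgamma g (u + v); set s' := Sgamma g (T *m (x' + y')).
have w_orth b : dotc (u - s) (T *m b) = 0 by apply: dotc_orth_range.
have w'_orth b : dotc (u' - s') (T *m b) = 0 by apply: dotc_orth_range.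
(* The last three terms vanish: [u - s] and [u' - s'] are orthogonal to the
   range of [T], which contains [v] and [u' - u]. *)
have split_dotc : dotc (u' - u) v =
    dotc (s' - s) (u + v - s) + dotc (u' - s') (u - s) - dotc (u - s) (u - s)
    - dotc (u - s) (u' - u) + dotc (u' - s') v - dotc (u - s) v.
  rewrite !dotcE -big_split -!sumrB -big_split -sumrB /=.
  by apply: eq_bigr => i _; rewrite !mxE; ring.
rewrite split_dotc -[u' - u]mulmxBr !w_orth w'_orth !subr0 addr0.
have := Sgamma_prox_ineq (u + v) s' g_gt0.
have := dotc_le_mean (u' - s') (u - s).
lra.
Qed.

Theorem theorem3p4 (R : realType) (L N : nat) (T : 'M[R]_(L, N)) (g : R)
  (hLN : (N <= L)%N) (hrank : \rank T = N) (hg : 0 < g)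
  (m : nat) (hm : (2 <= m)%N)
  (x y : 'I_m -> 'cV[R]_N) :
  (forall i, Hmap T g (x i) (y i)) ->
  \sum_(i < m) ipT T (x (ordS i) - x i) (y i) <= 0.
Proof.
move=> Hxy.
have normal i := Hmap_normal_eq (unitmx_gram hrank) (Hxy i).
apply: cyclic_sum_le0 => i.
exact: ipT_le_potentialB hg (normal i) (normal (ordS i)).
Qed.
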